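(* Let $q$ be an acyclic Boolean conjunctive query. If each cycle in the attack graph of $q$ is terminal, then each cycle in the attack graph of $q$ has length $2$.
   Context: Atoms have variables or constants as arguments; each relation name has a signature $[n,k]$ with primary key positions $1,\dots,k$. $\mathit{key}(F)$ is the set of variables in the primary-key positions of atom $F$, $\mathit{vars}(F)$ its set of variables. A Boolean conjunctive query $q$ is a finite set of atoms; $\mathit{vars}(q)$ its variables. A join tree for $q$ is an undirected tree on the atoms of $q$ such that whenever a variable occurs in atoms $F$ and $G$ it occurs in every atom on the path between them; the edge between $F$ and $G$ is labeled $\mathit{vars}(F)\cap\mathit{vars}(G)$. $q$ is acyclic if it has a join tree. $\mathit{FD}(q)=\{\mathit{key}(F)\to\mathit{vars}(F)\mid F\in q\}$ and $F^{+,q}=\{x\in\mathit{vars}(q)\mid \mathit{FD}(q\setminus\{F\})\models\mathit{key}(F)\to x\}$. The attack graph of $q$, computed from any join tree $\tau$ (independent of the choice), has an edge $F\to G$ for distinct atoms iff every label $L$ on the path between $F$ and $G$ in $\tau$ satisfies $L\not\subseteq F^{+,q}$. A cycle of length $n$ is a sequence of edges $F_0\to\dots\to F_{n-1}\to F_0$ with pairwise distinct $F_i$; it is terminal if there is no edge from a vertex of the cycle to a vertex outside the cycle. *)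

From mathcomp Require Import all_boot.
Set Implicit Arguments. Unset Strict Implicit. Unset Printing Implicit Defensive.

(* Variables and constants are both encoded by nat;
   a term is [inl x] (variable x) or [inr c] (constant c). *)
Definition var := nat.
Definition term := (var + nat)%type.

Definition atom := (nat * seq term)%type.
Definition rel_of (F : atom) : nat := F.1.
Definition args (F : atom) : seq term := F.2.

(* A signature assigns to each relation name a pair [n, k]:
   arity n, primary key positions 1..k. *)
Definition signature := nat -> nat * nat.

Definition wf_atom (sig : signature) (F : atom) : Prop :=
  size (args F) = (sig (rel_of F)).1 /\ (sig (rel_of F)).2 <= (sig (rel_of F)).1.

Definition vars_of_terms (s : seq term) : seq var :=
  pmap (fun t => if t is inl x then Some x else None) s.

Definition vars (F : atom) : seq var := vars_of_terms (args F).
Definition key (sig : signature) (F : atom) : seq var :=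
  vars_of_terms (take (sig (rel_of F)).2 (args F)).

(* A Boolean conjunctive query: a finite set of atoms (duplicate-free list). *)
Definition query := seq atom.

Definition vars_q (q : query) (x : var) : Prop := exists2 G, G \in q & x \in vars G.

(* FD(q \ {F}) |= key(F) -> x : x lies in every set of variables containing
   key(F) and closed under all FDs key(G) -> vars(G), G in q, G <> F. *)
Definition fd_entails (sig : signature) (q : query) (F : atom) (x : var) : Prop :=
  forall S : var -> Prop,
    (forall y, y \in key sig F -> S y) ->
    (forall G, G \in q -> G != F ->
       (forall y, y \in key sig G -> S y) -> forall y, y \in vars G -> S y) ->
    S x.

Definition Fplus (sig : signature) (q : query) (F : atom) (x : var) : Prop :=
  vars_q q x /\ fd_entails sig q F x.

Definition simple_path (t : rel atom) (F G : atom) (p : seq atom) : Prop :=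
  path t F p /\ last F p = G /\ uniq (F :: p).

Definition is_tree_on (q : query) (t : rel atom) : Prop :=
  (forall F G, t F G -> F \in q /\ G \in q) /\
  (forall F G, t F G = t G F) /\
  (forall F, ~~ t F F) /\
  (forall F G, F \in q -> G \in q ->
     exists p, simple_path t F G p /\ forall p', simple_path t F G p' -> p' = p).

Definition is_join_tree (q : query) (t : rel atom) : Prop :=
  is_tree_on q t /\
  forall F G x p, F \in q -> G \in q -> x \in vars F -> x \in vars G ->
    simple_path t F G p -> forall H, H \in F :: p -> x \in vars H.

Definition acyclic (q : query) : Prop := exists t, is_join_tree q t.

Definition label (H H' : atom) (x : var) : bool := (x \in vars H) && (x \in vars H').

Definition attacks (sig : signature) (q : query) (t : rel atom) (F G : atom) : Prop :=
  F \in q /\ G \in q /\ F <> G /\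
  forall p, simple_path t F G p ->
    forall i, i < size p ->
      ~ (forall x, label (nth F (F :: p) i) (nth F (F :: p) i.+1) x -> Fplus sig q F x).

(* A cycle F_0 -> ... -> F_{n-1} -> F_0 with pairwise distinct F_i;
   represented by the nonempty list [F_0; ...; F_{n-1}]; its length is n. *)
Definition is_cycle (E : atom -> atom -> Prop) (c : seq atom) : Prop :=
  0 < size c /\ uniq c /\
  forall i, i < size c -> E (nth (head (0, [::]) c) c i)
                            (nth (head (0, [::]) c) c ((i.+1) %% size c)).

Definition terminal (E : atom -> atom -> Prop) (c : seq atom) : Prop :=
  forall F G, F \in c -> E F G -> G \in c.

(* If F attacks G and G attacks H, then F attacks H or G attacks F.  Otherwise some
   edge {A, B} of the F-H path has its label inside F^{+,q}; it must lie on the G-H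
   path, so its label contains some x in F^{+,q} but not in G^{+,q}.  Suppose an edge
   {C, D} of the G-F path had its label inside G^{+,q}.  Since F attacks G, key(G) is
   not in F^{+,q}, so x is derived from key(F) without crossing {C, D} except through
   G^{+,q}: x occurs on F's side of {C, D}.  But A lies on G's side, hence x is in
   label(C, D), inside G^{+,q}, a contradiction.
   Now a cycle F -> G -> H -> ... of length at least 3 either has the chord F -> H,
   and the shorter terminal cycle without G is escaped by F -> G, or G -> F, and the
   terminal 2-cycle {F, G} is escaped by G -> H. *)

From mathcomp Require Import all_boot.
From Stdlib Require Import Classical.
Set Implicit Arguments. Unset Strict Implicit. Unset Printing Implicit Defensive.

Definition uedge (u x a b : atom) : bool :=
  ((u == a) && (x == b)) || ((u == b) && (x == a)).

Fixpoint walk_edge (u : atom) (w : seq atom) (a b : atom) : bool :=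
  if w is x :: w' then uedge u x a b || walk_edge x w' a b else false.

Lemma uedge_sym u x a b : uedge u x a b = uedge u x b a.
Proof. by rewrite /uedge orbC. Qed.

Lemma uedgeC u x a b : uedge x u a b = uedge u x a b.
Proof. by rewrite /uedge; case: (x == a); case: (u == b); case: (x == b); case: (u == a). Qed.

Lemma uedge_label u x a b : uedge u x a b -> label u x =1 label a b.
Proof.
by case/orP=> /andP[/eqP-> /eqP->] y //; rewrite /label andbC.
Qed.

Lemma walk_edge_sym u w a b : walk_edge u w a b = walk_edge u w b a.
Proof. by elim: w u => //= x w IH u; rewrite uedge_sym IH. Qed.

Lemma walk_edge_cat u w1 w2 a b :
  walk_edge u (w1 ++ w2) a b = walk_edge u w1 a b || walk_edge (last u w1) w2 a b.
Proof. by elim: w1 u => //= x w IH u; rewrite IH orbA. Qed.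

Lemma walk_edge_rev u w a b :
  walk_edge (last u w) (rev (belast u w)) a b = walk_edge u w a b.
Proof.
elim: w u => //= x w IH u.
rewrite rev_cons -cats1 walk_edge_cat IH /= orbF orbC uedgeC.
by case: w {IH} => //= y w; rewrite rev_cons last_rcons.
Qed.

Lemma walk_edge_mem u w a b : walk_edge u w a b -> (a \in u :: w) && (b \in u :: w).
Proof.
elim: w u => //= x w IH u /orP[|/IH].
- by case/orP=> /andP[/eqP<- /eqP<-]; rewrite !inE !eqxx ?orbT.
- by rewrite !inE => /andP[-> ->]; rewrite !orbT.
Qed.

Lemma walk_edge_nth d u w a b : walk_edge u w a b <->
  exists2 i, i < size w & uedge (nth d (u :: w) i) (nth d (u :: w) i.+1) a b.
Proof.
elim: w u => [|x w IH] u /=; first by split=> // -[].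
split.
- by case/orP=> [e|/IH[i lti e]]; [exists 0 | exists i.+1].
- case=> -[|i] /= lti e; first by rewrite e.
  by apply/orP; right; apply/IH; exists i.
Qed.

Lemma path_walk_edge (R : rel atom) u w a b :
  path R u w -> walk_edge u w a b -> R a b || R b a.
Proof.
elim: w u => //= x w IH u /andP[Rux Rw] /orP[|/IH]; last exact.
by case/orP=> /andP[/eqP<- /eqP<-]; rewrite Rux ?orbT.
Qed.

Lemma path_relI (R P : rel atom) u w : path R u w ->
  (forall a b, walk_edge u w a b -> P a b) -> path (fun a b => R a b && P a b) u w.
Proof.
elim: w u => //= x w IH u /andP[Rux Rw] Pw.
rewrite Rux Pw /=; last by rewrite /uedge !eqxx.
by apply: IH => // a b e; apply: Pw; rewrite e orbT.
Qed.

Definition on_tree_path (t : rel atom) (u v a b : atom) : Prop :=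
  exists2 p, simple_path t u v p & walk_edge u p a b.

Lemma on_tree_path_nil t u a b : ~ on_tree_path t u u a b.
Proof.
case=> -[|x p] // [_ [lp /andP[ux _]]] _.
by move: ux; rewrite -lp /= mem_last.
Qed.

Section TreePaths.

Variables (q : query) (t : rel atom).
Hypothesis tree : is_tree_on q t.

Lemma path_in_query u w : u \in q -> path t u w -> {subset u :: w <= q}.
Proof.
have [tq _] := tree.
elim: w u => [|x w IH] u uq /=; first by move=> _ z; rewrite inE => /eqP->.
case/andP=> tux tw z; rewrite in_cons => /orP[/eqP->//|].
exact: (IH x (tq _ _ tux).2 tw).
Qed.

Lemma on_tree_path_in_query u v a b : u \in q -> on_tree_path t u v a b -> a \in q.
Proof.
move=> uq [p [tp _] /walk_edge_mem/andP[ap _]]; exact: path_in_query uq tp _ ap.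
Qed.

(* Shortening w along its own edges yields a simple path, which must be the tree path. *)
Lemma on_tree_path_walk u v w a b : u \in q -> v \in q -> path t u w -> last u w = v ->
  on_tree_path t u v a b -> walk_edge u w a b.
Proof.
have [_ [_ [_ unique_path]]] := tree.
move=> uq vq tw lw [p sp e].
have Rw := path_relI (P := walk_edge u w) tw (fun _ _ e => e).
move: lw; case: (shortenP Rw) => p' Rp' up' _ lw'.
have sp' : simple_path t u v p' by split; [apply: sub_path Rp' => x y /andP[] | split].
have [p0 [_ unique]] := unique_path u v uq vq.
rewrite (unique _ sp) -(unique _ sp') in e.
by case/orP: (path_walk_edge Rp' e) => /andP[_]; rewrite // walk_edge_sym.
Qed.

Lemma on_tree_path_split u m v a b : u \in q -> m \in q -> v \in q ->
  on_tree_path t u v a b -> on_tree_path t u m a b \/ on_tree_path t m v a b.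
Proof.
have [_ [_ [_ unique_path]]] := tree.
move=> uq mq vq uv.
have [p1 [sp1 _]] := unique_path u m uq mq; have [tp1 [lp1 _]] := sp1.
have [p2 [sp2 _]] := unique_path m v mq vq; have [tp2 [lp2 _]] := sp2.
have tw : path t u (p1 ++ p2) by rewrite cat_path tp1 lp1.
have lw : last u (p1 ++ p2) = v by rewrite last_cat lp1.
move: (on_tree_path_walk uq vq tw lw uv); rewrite walk_edge_cat lp1 => /orP[e|e].
- by left; exists p1.
- by right; exists p2.
Qed.

Lemma on_tree_path_sym u v a b : on_tree_path t u v a b -> on_tree_path t v u a b.
Proof.
have [_ [tsym _]] := tree.
move=> [p [tp [lp up]] e]; exists (rev (belast u p)); last by rewrite -lp walk_edge_rev.
rewrite -lp; split; last split.
- by rewrite rev_path; apply: sub_path tp => x y; rewrite /= tsym.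
- by case: p {tp lp up e} => //= y p; rewrite rev_cons last_rcons.
- by rewrite -rev_rcons -lastI rev_uniq.
Qed.

Lemma on_tree_path_prefix u v m b c d : u \in q -> v \in q ->
  on_tree_path t u v m b -> on_tree_path t u m c d -> on_tree_path t u v c d.
Proof.
move=> uq vq [p sp /walk_edge_mem/andP[mp _]] um; exists p => //.
have [tp _] := sp; have mq := path_in_query uq tp mp.
move: mp tp; rewrite inE => /orP[/eqP eq_mu|].
  by rewrite -eq_mu in um; case: (on_tree_path_nil um).
case/splitPr=> p1 p2; rewrite -cat_rcons cat_path walk_edge_cat => /andP[tp1 _].
by rewrite (on_tree_path_walk uq mq tp1 (last_rcons _ _ _) um).
Qed.

Lemma on_tree_path_last u v : u \in q -> v \in q -> u <> v ->
  exists w, on_tree_path t u v w v.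
Proof.
have [_ [_ [_ unique_path]]] := tree.
move=> uq vq uv; have [p [sp _]] := unique_path u v uq vq.
case/lastP: p sp => [|p w] sp; first by case: uv; case: sp => _ [].
have [_ [lw _]] := sp; rewrite last_rcons in lw; subst w.
exists (last u p), (rcons p v) => //.
by rewrite -cats1 walk_edge_cat /= /uedge !eqxx orbT.
Qed.

End TreePaths.

Lemma join_tree_label q t J K C D x : is_join_tree q t -> J \in q -> K \in q ->
  x \in vars J -> x \in vars K -> on_tree_path t J K C D -> label C D x.
Proof.
move=> [_ connected] Jq Kq xJ xK [p sp /walk_edge_mem/andP[Cp Dp]].
have xon := connected J K x p Jq Kq xJ xK sp.
by rewrite /label (xon C Cp) (xon D Dp).
Qed.

Lemma crossing_label q t F J K C D x : is_join_tree q t ->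
  F \in q -> J \in q -> K \in q ->
  ~ on_tree_path t F J C D -> on_tree_path t F K C D ->
  x \in vars J -> x \in vars K -> label C D x.
Proof.
move=> jt Fq Jq Kq nFJ FK xJ xK.
case: (on_tree_path_split jt.1 Fq Jq Kq FK) => // JK.
exact: join_tree_label jt Jq Kq xJ xK JK.
Qed.

Definition label_in_Fplus sig q (F a b : atom) : Prop :=
  forall x, label a b x -> Fplus sig q F x.

Lemma attacksP sig q t F G : attacks sig q t F G <->
  [/\ F \in q, G \in q, F <> G &
      forall a b, on_tree_path t F G a b -> ~ label_in_Fplus sig q F a b].
Proof.
split=> [[Fq [Gq [FG nFG]]] | [Fq Gq FG nFG]].
- split=> // a b [p sp /(walk_edge_nth F)[i lti e]] ab_in.
  by apply: (nFG p sp i lti) => x; rewrite (uedge_label e); exact: ab_in.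
- do 3 split=> //; move=> p sp i lti; apply: (nFG _ _ (ex_intro2 _ _ p sp _)).
  by apply/(walk_edge_nth F); exists i; rewrite // /uedge !eqxx.
Qed.

Lemma not_attacks_edge sig q t F G : F \in q -> G \in q -> F <> G ->
  ~ attacks sig q t F G ->
  exists a b, on_tree_path t F G a b /\ label_in_Fplus sig q F a b.
Proof.
move=> Fq Gq FG nFG; apply: NNPP => nab; apply/nFG/attacksP; split=> // a b ab ab_in.
by apply: nab; exists a, b.
Qed.

Lemma key_sub_vars sig F y : y \in key sig F -> y \in vars F.
Proof. by rewrite /key /vars /vars_of_terms !mem_pmap map_take => /mem_take. Qed.

Lemma Fplus_key sig q F y : F \in q -> y \in key sig F -> Fplus sig q F y.
Proof.
move=> Fq yk; split; first by exists F => //; exact: key_sub_vars yk.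
by move=> S keyS _; exact: keyS.
Qed.

Lemma Fplus_closed sig q F K : K \in q -> K != F ->
  (forall y, y \in key sig K -> Fplus sig q F y) ->
  forall y, y \in vars K -> Fplus sig q F y.
Proof.
move=> Kq KF keyK y yK; split; first by exists K.
by move=> S keyS closedS; apply: (closedS K Kq KF) => // y' /keyK[_]; apply.
Qed.

Lemma attacks_key_not_in_Fplus sig q t F G : is_tree_on q t ->
  attacks sig q t F G -> ~ (forall y, y \in key sig G -> Fplus sig q F y).
Proof.
move=> tr /attacksP[Fq Gq FG nFG] keyG.
have [w wG] := on_tree_path_last tr Fq Gq FG.
apply: (nFG _ _ wG) => y /andP[_ yG].
by apply: (Fplus_closed Gq _ keyG yG); apply/eqP=> GF; case: FG.
Qed.

(* Cut the tree at {C, D}.  Deriving F^{+,q} from key(F) cannot cross to G's side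
   except through G^{+,q}: key(G) is not in F^{+,q}, and a variable shared by both
   sides lies in label(C, D), which is inside G^{+,q}. *)
Lemma Fplus_split sig q t F G C D x : is_join_tree q t -> F \in q -> G \in q ->
  ~ (forall y, y \in key sig G -> Fplus sig q F y) ->
  label_in_Fplus sig q G C D -> Fplus sig q F x ->
  Fplus sig q G x \/
  exists2 J, J \in q /\ ~ on_tree_path t F J C D & x \in vars J.
Proof.
move=> jt Fq Gq nkeyG CD_in [_ Fx].
pose S z := Fplus sig q F z /\
  (Fplus sig q G z \/ exists2 J, J \in q /\ ~ on_tree_path t F J C D & z \in vars J).
suff [] : S x by [].
apply: Fx => [y yk | K Kq KF SK y yK].
  split; first exact: Fplus_key.
  by right; exists F; [split=> //; exact: on_tree_path_nil | exact: key_sub_vars yk].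
split; first by apply: (Fplus_closed Kq KF) => // y' /SK[].
case: (eqVneq K G) => [KG | KG].
  by case: nkeyG => y'; rewrite -KG => /SK[].
case: (classic (on_tree_path t F K C D)) => [FK | nFK]; last by right; exists K.
left; apply: (Fplus_closed Kq KG) => // y' yk.
case: (SK y' yk) => _ [// | [J [Jq nFJ] yJ]].
exact/CD_in/(crossing_label jt Fq Jq Kq nFJ FK yJ (key_sub_vars yk)).
Qed.

Lemma attacks_trans_or_back sig q t F G H : is_join_tree q t ->
  attacks sig q t F G -> attacks sig q t G H -> F <> H ->
  attacks sig q t F H \/ attacks sig q t G F.
Proof.
move=> jt aFG aGH FH; have tr := jt.1.
have [Fq Gq FG nFG] := (attacksP sig q t F G).1 aFG.
have [_ Hq _ nGH] := (attacksP sig q t G H).1 aGH.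
case: (classic (attacks sig q t F H)) => [| naFH]; [by left | right].
have [A [B [FH_AB AB_in]]] := not_attacks_edge Fq Hq FH naFH.
have GH_AB : on_tree_path t G H A B.
  by case: (on_tree_path_split tr Fq Gq Hq FH_AB) => // /nFG.
have [x /[dup] /AB_in Fx xAB nGx] : exists2 x, label A B x & ~ Fplus sig q G x.
  apply: NNPP => nx; apply: (nGH _ _ GH_AB) => x xAB.
  by apply: NNPP => nGx; apply: nx; exists x.
have nkeyG := attacks_key_not_in_Fplus tr aFG.
apply/attacksP; split=> // [/esym // | C D GF_CD CD_in].
have Aq := on_tree_path_in_query tr Gq GH_AB.
have FA_CD : on_tree_path t F A C D.
  apply: NNPP => nFA.
  case: (on_tree_path_split tr Fq Aq Gq (on_tree_path_sym tr GF_CD)) => // AG_CD.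
  exact: nGH _ _ (on_tree_path_prefix tr Gq Hq GH_AB (on_tree_path_sym tr AG_CD)) CD_in.
case: (Fplus_split jt Fq Gq nkeyG CD_in Fx) => [// | [J [Jq nFJ] xJ]].
exact/nGx/CD_in/(crossing_label jt Fq Jq Aq nFJ FA_CD xJ (andP xAB).1).
Qed.

Section Cycles.

Variable E : atom -> atom -> Prop.

Lemma is_cycle_skip a b c r :
  is_cycle E [:: a, b, c & r] -> E a c -> is_cycle E [:: a, c & r].
Proof.
move=> [_ [/= /andP[abcr /andP[_ ucr]] Ecyc]] Eac.
split=> //; split; first by move: abcr; rewrite /= !inE !negb_or => /and3P[_ -> ->].
case=> [|i] /= lti //.
have := Ecyc i.+2 lti; rewrite /=.
case: (ltnP i (size r)) => [ltir | leri]; first by rewrite !modn_small.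
have -> : i = size r by apply/eqP; rewrite eqn_leq leri andbT -ltnS.
by rewrite !modnn.
Qed.

Lemma is_cycle_pair a b : a != b -> E a b -> E b a -> is_cycle E [:: a; b].
Proof. by move=> ab Eab Eba; do 2 split; rewrite /= ?inE ?ab // => -[|[|]]. Qed.

Lemma terminal_cycle_size2 :
  (forall a, ~ E a a) ->
  (forall a b c, E a b -> E b c -> a <> c -> E a c \/ E b a) ->
  (forall c, is_cycle E c -> terminal E c) ->
  forall c, is_cycle E c -> size c = 2.
Proof.
move=> irrE transE term [|a [|b [|c r]]] // cyc; first by case: cyc.
  by case: cyc => _ [_ /(_ 0 isT) /irrE].
have [_ [/= /andP[abcr /andP[bcr _]] Ecyc]] := cyc.
have Eab : E a b := Ecyc 0 isT.
have Ebc : E b c := Ecyc 1 isT.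
move: abcr bcr; rewrite !inE !negb_or => /and3P[ab ac ar] /andP[bc br].
case: (transE a b c Eab Ebc (elimN eqP ac)) => [Eac | Eba].
- have := term _ (is_cycle_skip cyc Eac) a b.
  by rewrite !inE eqxx (eq_sym b a) (negbTE ab) (negbTE bc) (negbTE br) => /(_ isT Eab).
- have := term _ (is_cycle_pair ab Eab Eba) b c.
  by rewrite !inE eqxx orbT (eq_sym c a) (negbTE ac) (eq_sym c b) (negbTE bc) => /(_ isT Ebc).
Qed.

End Cycles.

Unset Implicit Arguments.

Theorem lemma6 (sig : signature) (q : query) (t : rel atom) :
  uniq q ->
  (forall F, F \in q -> wf_atom sig F) ->
  is_join_tree q t ->
  (forall c, is_cycle (attacks sig q t) c -> terminal (attacks sig q t) c) ->
  forall c, is_cycle (attacks sig q t) c -> size c = 2.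
Proof.
move=> _ _ jt; apply: terminal_cycle_size2 => [F [_ [_ []]] // | F G H].
exact: attacks_trans_or_back.
Qed.
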